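(* Let $\mathcal{Y}$, $\mathcal{O}$ be finite sets, $\varphi\colon\mathcal{Y}\to\mathbb{R}^p$, $\psi\colon\mathcal{O}\to\mathbb{R}^p$, and $L(\hat y,y)=\langle\psi(\hat y),V\varphi(y)+b\rangle+c(y)$ with $V\in\mathbb{R}^{p\times p}$, $b\in\mathbb{R}^p$, $c\colon\mathcal{Y}\to\mathbb{R}$. Let $\Psi\colon\mathbb{R}^p\to\mathbb{R}\cup\{\infty\}$ be of Legendre type and $\frac1\beta$-strongly convex over $\mathcal{C}$ w.r.t. a norm $\|\cdot\|$ ($\beta>0$), where $\mathcal{C}$ is a closed convex set with $\varphi(\mathcal{Y})\subseteq\mathcal{C}\subseteq\operatorname{dom}(\Psi)$. Let $\sigma:=\max_{\hat y\in\mathcal{O}}\|V^\top\psi(\hat y)\|_*>0$. Take the surrogate $S(\theta,y)=S^\Psi_{\mathcal{C}}(\theta,y)$ and the decoder $d=\hat y_L\circ P^\Psi_{\mathcal{C}}$. Then the calibration function satisfies $$\zeta(\epsilon)\ge\frac{\epsilon^2}{8\beta\sigma^2}\qquad\text{for all }\epsilon\ge0.$$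
   Context: $\Omega=\Psi+I_{\mathcal{C}}$ with $I_{\mathcal{C}}$ the indicator of $\mathcal{C}$; $S^\Psi_{\mathcal{C}}(\theta,y)=\Omega^*(\theta)+\Omega(\varphi(y))-\langle\theta,\varphi(y)\rangle$ with $\Omega^*$ the Fenchel conjugate. $P^\Psi_{\mathcal{C}}(\theta)=\operatorname{argmin}_{u\in\mathcal{C}}D_\Psi(u,\nabla\Psi^*(\theta))$, $D_\Psi(u,v)=\Psi(u)-\Psi(v)-\langle\nabla\Psi(v),u-v\rangle$; under the hypotheses $P^\Psi_{\mathcal{C}}=\nabla\Omega^*$. Strong convexity over $\mathcal{C}$: $\Psi(tu+(1-t)v)\le t\Psi(u)+(1-t)\Psi(v)-\frac{t(1-t)}{2\beta}\|u-v\|^2$ for $u,v\in\mathcal{C}$, $t\in[0,1]$. $\|\cdot\|_*$ is the dual norm. $\hat y_L(u)\in\operatorname{argmin}_{y'\in\mathcal{O}}\langle\psi(y'),Vu+b\rangle$ (fixed tie-breaking). Pointwise risks for $q\in\triangle^{|\mathcal{Y}|}$: $\ell(\hat y,q)=\mathbb{E}_{Y\sim q}L(\hat y,Y)$, $s(\theta,q)=\mathbb{E}_{Y\sim q}S(\theta,Y)$, excesses $\delta\ell(\hat y,q)=\ell(\hat y,q)-\min_{y'\in\mathcal{O}}\ell(y',q)$, $\delta s(\theta,q)=s(\theta,q)-\inf_{\theta'}s(\theta',q)$. Calibration function: $\zeta(\epsilon)=\inf_{\theta\in\mathbb{R}^p,q\in\triangle^{|\mathcal{Y}|}}\delta s(\theta,q)$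 subject to $\delta\ell(d(\theta),q)\ge\epsilon$. *)

From mathcomp Require Import all_boot.
From Stdlib Require Import Reals ClassicalEpsilon.
Set Implicit Arguments. Unset Strict Implicit. Unset Printing Implicit Defensive.
Open Scope R_scope.

Definition vec (p : nat) := 'I_p -> R.
Definition vadd {p} (x y : vec p) : vec p := fun i => x i + y i.
Definition vsub {p} (x y : vec p) : vec p := fun i => x i - y i.
Definition vscale {p} (a : R) (x : vec p) : vec p := fun i => a * x i.
Definition dot {p} (x y : vec p) : R := \big[Rplus/R0]_(i < p) (x i * y i).
Definition enorm {p} (x : vec p) : R := sqrt (dot x x).
Definition mat (p : nat) := 'I_p -> 'I_p -> R.
Definition mulmv {p} (V : mat p) (x : vec p) : vec p :=
  fun i => \big[Rplus/R0]_(j < p) (V i j * x j).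
Definition mulmtv {p} (V : mat p) (x : vec p) : vec p :=
  fun j => \big[Rplus/R0]_(i < p) (V i j * x i).
Definition cvx {p} (t : R) (u v : vec p) : vec p :=
  vadd (vscale t u) (vscale (1 - t) v).

(* ---------- total sup / inf (junk value 0 when no real sup/inf exists) ---------- *)
Definition Rsup (E : R -> Prop) : R :=
  match excluded_middle_informative (exists l, is_lub E l) with
  | left H => proj1_sig (constructive_indefinite_description _ H)
  | right _ => 0
  end.
Definition Rinf (E : R -> Prop) : R := - Rsup (fun x => E (- x)).

Definition is_norm {p} (N : vec p -> R) : Prop :=
  (forall x, 0 <= N x) /\
  (forall x, N x = 0 -> x = (fun _ => 0)) /\
  (forall a x, N (vscale a x) = Rabs a * N x) /\
  (forall x y, N (vadd x y) <= N x + N y).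
Definition dual_norm {p} (N : vec p -> R) (z : vec p) : R :=
  Rsup (fun w => exists x, N x <= 1 /\ w = dot z x).

(* ---------- topology of R^p (Euclidean; all norms equivalent) ---------- *)
Definition vinterior {p} (D : vec p -> Prop) (x : vec p) : Prop :=
  exists d, 0 < d /\ forall y, enorm (vsub y x) < d -> D y.
Definition vclosed {p} (C : vec p -> Prop) : Prop :=
  forall x, (forall d, 0 < d -> exists y, C y /\ enorm (vsub y x) < d) -> C x.
Definition vconvex {p} (C : vec p -> Prop) : Prop :=
  forall u v t, C u -> C v -> 0 <= t <= 1 -> C (cvx t u v).
Definition seq_conv {p} (xs : nat -> vec p) (x : vec p) : Prop :=
  forall e, 0 < e -> exists N, forall k, (N <= k)%nat -> enorm (vsub (xs k) x) < e.

Definition has_grad {p} (D : vec p -> Prop) (f : vec p -> R) (x g : vec p) : Prop :=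
  vinterior D x /\
  forall e, 0 < e -> exists d, 0 < d /\ forall h, enorm h < d ->
    Rabs (f (vadd x h) - f x - dot g h) <= e * enorm h.

(* ---------- extended-valued functions R^p -> R U {+oo} ----------
   An extended-valued function is represented by a pair (dom, f):
   its value is f x on dom and +oo outside dom. *)
Definition ext_convex {p} (dom : vec p -> Prop) (f : vec p -> R) : Prop :=
  vconvex dom /\
  forall u v t, dom u -> dom v -> 0 <= t <= 1 ->
    f (cvx t u v) <= t * f u + (1 - t) * f v.
Definition ext_proper {p} (dom : vec p -> Prop) : Prop := exists x, dom x.
(* closed = lower semicontinuous (for extended values) *)
Definition ext_lsc {p} (dom : vec p -> Prop) (f : vec p -> R) : Prop :=
  forall x a, (~ dom x \/ a < f x) ->
    exists d, 0 < d /\ forall y, enorm (vsub y x) < d -> dom y -> a < f y.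
Definition subgrad {p} (dom : vec p -> Prop) (f : vec p -> R) (x g : vec p) : Prop :=
  dom x /\ forall y, dom y -> f x + dot g (vsub y x) <= f y.
Definition dom_subdiff {p} (dom : vec p -> Prop) (f : vec p -> R) (x : vec p) : Prop :=
  exists g, subgrad dom f x g.
Definition strictly_convex_on {p} (D : vec p -> Prop) (f : vec p -> R) : Prop :=
  forall u v t, D u -> D v -> u <> v -> 0 < t < 1 ->
    f (cvx t u v) < t * f u + (1 - t) * f v.
(* Rockafellar, Convex Analysis, Sec. 26 *)
Definition essentially_smooth {p} (dom : vec p -> Prop) (f : vec p -> R) : Prop :=
  (exists x, vinterior dom x) /\
  (forall x, vinterior dom x -> exists g, has_grad dom f x g) /\
  (forall (xs gs : nat -> vec p) x,
      (forall k, has_grad dom f (xs k) (gs k)) -> seq_conv xs x -> ~ vinterior dom x ->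
      forall M, exists N, forall k, (N <= k)%nat -> M <= enorm (gs k)).
Definition essentially_strictly_convex {p} (dom : vec p -> Prop) (f : vec p -> R) : Prop :=
  forall D : vec p -> Prop, vconvex D -> (forall x, D x -> dom_subdiff dom f x) ->
    strictly_convex_on D f.
Definition legendre_type {p} (dom : vec p -> Prop) (f : vec p -> R) : Prop :=
  ext_proper dom /\ ext_convex dom f /\ ext_lsc dom f /\
  essentially_smooth dom f /\ essentially_strictly_convex dom f.

Definition strongly_convex_over {p} (f : vec p -> R) (C : vec p -> Prop)
    (N : vec p -> R) (beta : R) : Prop :=
  forall u v t, C u -> C v -> 0 <= t <= 1 ->
    f (cvx t u v) <= t * f u + (1 - t) * f v - t * (1 - t) / (2 * beta) * (N (vsub u v))^2.

Definition conj_set {p} (dom : vec p -> Prop) (f : vec p -> R) (th : vec p) : R -> Prop :=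
  fun w => exists u, dom u /\ w = dot th u - f u.
(* the conjugate is finite (< +oo) at th *)
Definition conj_fin {p} (dom : vec p -> Prop) (f : vec p -> R) (th : vec p) : Prop :=
  exists l, is_lub (conj_set dom f th) l.
Definition fconj {p} (dom : vec p -> Prop) (f : vec p -> R) (th : vec p) : R :=
  Rsup (conj_set dom f th).

(* Omega = Psi + I_C, as the extended function (dom Psi /\ C, Psi) *)
Definition Omega_dom {p} (dom C : vec p -> Prop) : vec p -> Prop := fun u => dom u /\ C u.
Definition Omega_star {p} (dom C : vec p -> Prop) (Psi : vec p -> R) (th : vec p) : R :=
  fconj (Omega_dom dom C) Psi th.

(* Bregman divergence D_Psi(u, v) = Psi u - Psi v - <grad Psi v, u - v>, given g = grad Psi v *)
Definition bregman {p} (Psi : vec p -> R) (u v g : vec p) : R :=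
  Psi u - Psi v - dot g (vsub u v).

(* u = P^Psi_C(th) = argmin_{u in C} D_Psi(u, grad Psi^*(th)) *)
Definition bregman_proj {p} (dom C : vec p -> Prop) (Psi : vec p -> R) (th u : vec p) : Prop :=
  exists v g, has_grad (conj_fin dom Psi) (fconj dom Psi) th v /\
    has_grad dom Psi v g /\
    C u /\ forall u', C u' -> bregman Psi u v g <= bregman Psi u' v g.
(* P^Psi_C(th): the Bregman projection where grad Psi^*(th) exists; at the
   remaining th it is taken to be grad Omega^*(th) (the paper's identity
   P^Psi_C = grad Omega^* ). *)
Definition proj_rel {p} (dom C : vec p -> Prop) (Psi : vec p -> R) (th u : vec p) : Prop :=
  bregman_proj dom C Psi th u \/
  ((~ exists v, has_grad (conj_fin dom Psi) (fconj dom Psi) th v) /\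
   has_grad (conj_fin (Omega_dom dom C) Psi) (Omega_star dom C Psi) th u).

Section Task.
Variables (p : nat) (Y O : finType).

Definition lossL (psi : O -> vec p) (phi : Y -> vec p) (V : mat p) (b : vec p)
    (c : Y -> R) (o : O) (y : Y) : R :=
  dot (psi o) (vadd (mulmv V (phi y)) b) + c y.

(* o = yhat_L(u), for any (hence every fixed) tie-breaking rule *)
Definition yhat_rel (psi : O -> vec p) (V : mat p) (b u : vec p) (o : O) : Prop :=
  forall o', dot (psi o) (vadd (mulmv V u) b) <= dot (psi o') (vadd (mulmv V u) b).

Definition decoder_rel (psi : O -> vec p) (V : mat p) (b : vec p)
    (dom C : vec p -> Prop) (Psi : vec p -> R) (th : vec p) (o : O) : Prop :=
  exists u, proj_rel dom C Psi th u /\ yhat_rel psi V b u o.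

Definition in_simplex (q : Y -> R) : Prop :=
  (forall y, 0 <= q y) /\ \big[Rplus/R0]_(y : Y) q y = 1.

Definition ell psi phi V b c (o : O) (q : Y -> R) : R :=
  \big[Rplus/R0]_(y : Y) (q y * lossL psi phi V b c o y).
Definition delta_ell psi phi V b c (o : O) (q : Y -> R) : R :=
  ell psi phi V b c o q - Rinf (fun w => exists o', w = ell psi phi V b c o' q).

(* S^Psi_C(th, y) = Omega^*(th) + Omega(phi y) - <th, phi y>; Omega(phi y) = Psi(phi y)
   since phi y lies in C, a subset of dom Psi *)
Definition surr (phi : Y -> vec p) (dom C : vec p -> Prop) (Psi : vec p -> R)
    (th : vec p) (y : Y) : R :=
  Omega_star dom C Psi th + Psi (phi y) - dot th (phi y).
Definition srisk phi dom C Psi (th : vec p) (q : Y -> R) : R :=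
  \big[Rplus/R0]_(y : Y) (q y * surr phi dom C Psi th y).
Definition delta_s phi dom C Psi (th : vec p) (q : Y -> R) : R :=
  srisk phi dom C Psi th q - Rinf (fun w => exists th', w = srisk phi dom C Psi th' q).

(* zeta(eps) >= bnd, where zeta(eps) = inf { delta_s(th,q) : delta_ell(d th, q) >= eps }
   (inf of the empty set = +oo) *)
Definition zeta_ge psi phi V b c dom C Psi (eps bnd : R) : Prop :=
  forall (th : vec p) (q : Y -> R) (o : O),
    in_simplex q -> decoder_rel psi V b dom C Psi th o ->
    eps <= delta_ell psi phi V b c o q ->
    bnd <= delta_s phi dom C Psi th q.
End Task.

(* Let mu = E_q phi(Y), a point of C, and u = P(th).  The point u maximizes
   <th, .> - Psi over C, or at least is a limit of near-maximizers, so strong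
   convexity of Psi over C gives Omega^*(th) + Psi(mu) - <th, mu> >= ||mu - u||^2 / (2 beta).
   Since inf_th' E_q S(th', Y) <= E_q Psi(phi Y) - Psi(mu) (take th' = grad Psi at points
   of dom Psi approaching mu), this lower-bounds the excess surrogate risk.  On the target
   side, l(o, q) = <psi(o), V mu + b> + E_q c(Y) is affine in mu and d(th) is optimal for u,
   so the excess target risk is at most 2 sigma ||mu - u|| by the dual-norm inequality. *)

From HB Require Import structures.
From mathcomp Require Import all_boot.
From Stdlib Require Import Reals Lra FunctionalExtensionality ClassicalEpsilon.
Set Implicit Arguments. Unset Strict Implicit.
Open Scope R_scope.

HB.instance Definition _ := Monoid.isComLaw.Build R R0 Rplus
  (fun a b c => esym (Rplus_assoc a b c)) Rplus_comm Rplus_0_l.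
HB.instance Definition _ := Monoid.isMulLaw.Build R R0 Rmult Rmult_0_l Rmult_0_r.
HB.instance Definition _ := Monoid.isAddLaw.Build R Rmult Rplus
  Rmult_plus_distr_r Rmult_plus_distr_l.

Lemma Rle_of_forall_small a b K :
  (forall s, 0 < s < 1 -> a <= b + s * K) -> a <= b.
Proof.
move=> H; apply: Rle_plus_epsilon => e He.
have HK := Rabs_pos K.
pose s := Rmin (1 / 2) (e / (Rabs K + 1)).
have Hs : 0 < s by apply: Rmin_pos; [lra | apply: Rdiv_lt_0_compat; lra].
have Hs1 : s <= 1 / 2 := Rmin_l _ _.
have Hse : s * (Rabs K + 1) <= e.
  have := Rmin_r (1 / 2) (e / (Rabs K + 1)); rewrite -/s => h.
  apply: Rle_trans (Rmult_le_compat_r _ _ _ _ h) _; first lra.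
  by right; field; lra.
have HsK : s * K <= s * (Rabs K + 1).
  by apply: Rmult_le_compat_l; [lra | have := Rle_abs K; lra].
have := H s ltac:(lra); lra.
Qed.

Lemma Rmult_div_succ_le K e : 0 <= K -> 0 <= e -> K * (e / (K + 1)) <= e.
Proof.
move=> HK He; have -> : K * (e / (K + 1)) = e - e / (K + 1) by field; lra.
have : 0 <= e / (K + 1).
  by apply: Rmult_le_pos => //; apply: Rlt_le; apply: Rinv_0_lt_compat; lra.
lra.
Qed.

Lemma Rdiv_compl_mul_le s x B :
  0 < s <= 1 / 2 -> x <= B -> 0 <= B -> s / (1 - s) * x <= 2 * s * B.
Proof.
move=> Hs HxB HB; have Hs2 : 0 < s / (1 - s) by apply: Rdiv_lt_0_compat; lra.
have [Hneg|Hpos] := Rle_or_lt x 0.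
  by have := Rmult_le_compat_l _ _ _ (Rlt_le _ _ Hs2) Hneg; nra.
have : s / (1 - s) <= 2 * s.
  apply: (Rmult_le_reg_r (1 - s)); first lra.
  by rewrite /Rdiv Rmult_assoc Rinv_l; nra.
move=> /(Rmult_le_compat_r _ _ _ (Rlt_le _ _ Hpos)) Hle.
by have := Rmult_le_compat_l _ _ _ (Rlt_le _ _ (proj1 Hs)) HxB; lra.
Qed.

Lemma sumR_le (I : finType) (F G : I -> R) :
  (forall i, F i <= G i) -> \big[Rplus/R0]_(i : I) F i <= \big[Rplus/R0]_(i : I) G i.
Proof.
move=> H; apply: (big_ind2 (fun a b => a <= b)); [lra | | by move=> i _; apply: H].
by move=> a b c d; lra.
Qed.

Lemma sumR_ge0 (I : finType) (F : I -> R) :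
  (forall i, 0 <= F i) -> 0 <= \big[Rplus/R0]_(i : I) F i.
Proof.
move=> H; apply: (big_ind (fun a => 0 <= a)); [lra | | by move=> i _; apply: H].
by move=> a b; lra.
Qed.

Lemma sumR_abs_le (I : finType) (F : I -> R) :
  Rabs (\big[Rplus/R0]_(i : I) F i) <= \big[Rplus/R0]_(i : I) Rabs (F i).
Proof.
apply: (big_ind2 (fun a b => Rabs a <= b)); [rewrite Rabs_R0; lra | | by move=> i _; lra].
move=> a b c d H1 H2; apply: Rle_trans (Rabs_triang _ _) _; lra.
Qed.

Lemma sumR_const n c : \big[Rplus/R0]_(i < n) c = INR n * c.
Proof.
elim: n => [|n IH]; first by rewrite big_ord0 /=; ring.
by rewrite big_ord_recl IH S_INR; ring.
Qed.

Lemma Rsup_lub E l : is_lub E l -> Rsup E = l.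
Proof.
move=> Hl; rewrite /Rsup; case: excluded_middle_informative => [H|H].
  by case: constructive_indefinite_description => m Hm /=; apply: is_lub_u Hm Hl.
by exfalso; apply: H; exists l.
Qed.

(* The nonnegativity of [x] covers the junk value [Rinf E = 0] when [E] has no infimum. *)
Lemma Rinf_le_nonneg (E : R -> Prop) x : E x -> 0 <= x -> Rinf E <= x.
Proof.
move=> Ex Hx; rewrite /Rinf /Rsup; case: excluded_middle_informative => [H|_]; last lra.
case: constructive_indefinite_description => l [Hl _] /=.
have : - x <= l by apply: Hl; rewrite Ropp_involutive.
lra.
Qed.

Section Vectors.
Context {p : nat}.
Implicit Types x y z u v w : vec p.

Definition vzero : vec p := fun _ => 0.
Definition l1norm x := \big[Rplus/R0]_(i < p) Rabs (x i).

Lemma dotC x y : dot x y = dot y x.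
Proof. by rewrite /dot; apply: eq_bigr => i _; ring. Qed.

Lemma dotDl x y z : dot (vadd x y) z = dot x z + dot y z.
Proof. by rewrite /dot -big_split /=; apply: eq_bigr => i _; rewrite /vadd; ring. Qed.

Lemma dotZl a x y : dot (vscale a x) y = a * dot x y.
Proof. by rewrite /dot big_distrr /=; apply: eq_bigr => i _; rewrite /vscale; ring. Qed.

Lemma dotDr x y z : dot z (vadd x y) = dot z x + dot z y.
Proof. by rewrite dotC dotDl !(dotC z). Qed.

Lemma dotZr a x y : dot y (vscale a x) = a * dot y x.
Proof. by rewrite dotC dotZl (dotC x). Qed.

Lemma vsubE x y : vsub x y = vadd x (vscale (-1) y).
Proof. by apply: functional_extensionality => i; rewrite /vsub /vadd /vscale; ring. Qed.

Lemma dotBl x y z : dot (vsub x y) z = dot x z - dot y z.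
Proof. by rewrite vsubE dotDl dotZl; ring. Qed.

Lemma dotBr x y z : dot z (vsub x y) = dot z x - dot z y.
Proof. by rewrite vsubE dotDr dotZr; ring. Qed.

Lemma dot0r x : dot x vzero = 0.
Proof. by rewrite /dot big1 // => i _; rewrite /vzero; ring. Qed.

Lemma vsubNC x y : vsub y x = vscale (-1) (vsub x y).
Proof. by apply: functional_extensionality => i; rewrite /vsub /vscale; ring. Qed.

Lemma vsubvv x : vsub x x = vzero.
Proof. by apply: functional_extensionality => i; rewrite /vsub /vzero; ring. Qed.

Lemma vaddKv x h : vsub (vadd x h) x = h.
Proof. by apply: functional_extensionality => i; rewrite /vsub /vadd; ring. Qed.

Lemma dot_self_ge0 x : 0 <= dot x x.
Proof. by apply: sumR_ge0 => i; nra. Qed.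

Lemma dot_self_coord_le x i : x i * x i <= dot x x.
Proof.
rewrite /dot (bigD1 i) //= -{1}(Rplus_0_r (x i * x i)); apply: Rplus_le_compat_l.
by apply: (big_ind (fun a => 0 <= a)); [lra | move=> a b; lra | move=> j _; nra].
Qed.

Lemma dot_self_enorm x : dot x x = enorm x * enorm x.
Proof. by rewrite /enorm sqrt_sqrt //; apply: dot_self_ge0. Qed.

Lemma enorm_ge0 x : 0 <= enorm x.
Proof. exact: sqrt_pos. Qed.

Lemma enorm0 : enorm vzero = 0.
Proof. by rewrite /enorm dot0r sqrt_0. Qed.

Lemma enorm_coord_le x i : Rabs (x i) <= enorm x.
Proof.
rewrite -sqrt_Rsqr_abs /enorm; apply: sqrt_le_1_alt.
exact: dot_self_coord_le.
Qed.

Lemma enormZ a x : enorm (vscale a x) = Rabs a * enorm x.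
Proof.
rewrite /enorm dotZl dotZr -Rmult_assoc sqrt_mult; last exact: dot_self_ge0.
- by rewrite -/(Rsqr a) sqrt_Rsqr_abs.
- by nra.
Qed.

Lemma enorm_eq0 x : enorm x = 0 -> x = vzero.
Proof.
move=> H; apply: functional_extensionality => i; rewrite /vzero.
have := dot_self_coord_le x i; rewrite dot_self_enorm H; nra.
Qed.

Lemma l1norm_ge0 x : 0 <= l1norm x.
Proof. by apply: sumR_ge0 => i; apply: Rabs_pos. Qed.

Lemma l1norm_le_enorm x : l1norm x <= INR p * enorm x.
Proof. by rewrite -sumR_const; apply: sumR_le => i; apply: enorm_coord_le. Qed.

Lemma dot_abs_le z x : Rabs (dot z x) <= l1norm z * enorm x.
Proof.
apply: Rle_trans (sumR_abs_le _) _; rewrite /l1norm big_distrl /=.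
apply: sumR_le => i; rewrite Rabs_mult.
by apply: Rmult_le_compat_l; [apply: Rabs_pos | apply: enorm_coord_le].
Qed.

End Vectors.

(** * Norms on R^p *)

Section NormBasics.
Context {n : nat} (N : vec n -> R).
Hypothesis HN : is_norm N.

Lemma norm_ge0 x : 0 <= N x.
Proof. by case: HN. Qed.

Lemma norm0 : N vzero = 0.
Proof.
have [_ [_ [HZ _]]] := HN.
have -> : (vzero : vec n) = vscale 0 vzero.
  by apply: functional_extensionality => i; rewrite /vscale /vzero; ring.
by rewrite HZ Rabs_R0; ring.
Qed.

Lemma normN x : N (vscale (-1) x) = N x.
Proof. by have [_ [_ [-> _]]] := HN; rewrite Rabs_Ropp Rabs_R1; ring. Qed.

Lemma norm_vsubC x y : N (vsub x y) = N (vsub y x).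
Proof. by rewrite vsubNC normN. Qed.

Lemma norm_vsub_triangle x y z : N (vsub x z) <= N (vsub x y) + N (vsub y z).
Proof.
have [_ [_ [_ HD]]] := HN; apply: Rle_trans (HD _ _); right; congr N.
by apply: functional_extensionality => i; rewrite /vsub /vadd; ring.
Qed.

End NormBasics.

Definition vcons0 {n} (w : vec n) : vec n.+1 :=
  fun j => if unlift ord0 j is Some k then w k else 0.
Definition vunit0 {n} : vec n.+1 := fun j => if j == ord0 then 1 else 0.
Definition vbehead {n} (x : vec n.+1) : vec n := fun k => x (lift ord0 k).

Lemma vcons0_lift n (w : vec n) k : vcons0 w (lift ord0 k) = w k.
Proof. by rewrite /vcons0 liftK. Qed.

Lemma vcons0_0 n (w : vec n) : vcons0 w ord0 = 0.
Proof. by rewrite /vcons0 unlift_none. Qed.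

Lemma vunit0_lift n k : (vunit0 : vec n.+1) (lift ord0 k) = 0.
Proof. by rewrite /vunit0 eq_sym (negbTE (neq_lift _ _)). Qed.

Lemma vunit0_0 n : (vunit0 : vec n.+1) ord0 = 1.
Proof. by rewrite /vunit0 eqxx. Qed.

Lemma vec_eq_lift n (x y : vec n.+1) :
  x ord0 = y ord0 -> (forall k, x (lift ord0 k) = y (lift ord0 k)) -> x = y.
Proof.
move=> H0 H1; apply: functional_extensionality => j.
by case: (unliftP ord0 j) => [k ->|->].
Qed.

Local Ltac coordwise := apply: vec_eq_lift => [|k];
  rewrite /vadd /vscale /vbehead ?vcons0_0 ?vunit0_0 ?vcons0_lift ?vunit0_lift.

Lemma vunit0_vcons0 n (x : vec n.+1) :
  x = vadd (vscale (x ord0) vunit0) (vcons0 (vbehead x)).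
Proof. by coordwise; ring. Qed.

Lemma l1norm_vbehead n (x : vec n.+1) : l1norm x = Rabs (x ord0) + l1norm (vbehead x).
Proof. by rewrite /l1norm big_ord_recl. Qed.

Lemma is_norm_vcons0 n (N : vec n.+1 -> R) : is_norm N -> is_norm (fun w => N (vcons0 w)).
Proof.
move=> [H0 [HE [HZ HD]]]; split; [by move=> x; apply: H0 | split; [|split]].
- move=> x /HE Hx; apply: functional_extensionality => k.
  by have := f_equal (fun f => f (lift ord0 k)) Hx; rewrite vcons0_lift.
- by move=> a x; rewrite -HZ; congr N; coordwise; ring.
- by move=> x y; apply: Rle_trans (HD _ _); right; congr N; coordwise; ring.
Qed.

Lemma norm_le_sabs n (N : vec n -> R) :
  is_norm N -> exists K, 0 <= K /\ forall x, N x <= K * l1norm x.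
Proof.
elim: n N => [|n IH] N HN.
  exists 0; split => [|x]; first lra.
  have -> : x = vzero by apply: functional_extensionality => -[].
  by rewrite (norm0 HN); lra.
have [K [HK HNK]] := IH _ (is_norm_vcons0 HN).
have [H0 [_ [HZ HD]]] := HN.
exists (N vunit0 + K); split => [|x]; first by have := H0 vunit0; lra.
rewrite {1}(vunit0_vcons0 x) l1norm_vbehead.
apply: Rle_trans (HD _ _) _; rewrite HZ.
have := HNK (vbehead x); have := H0 vunit0; have := Rabs_pos (x ord0).
have := l1norm_ge0 (vbehead x); nra.
Qed.

Lemma norm_le_enorm p (N : vec p -> R) :
  is_norm N -> exists K, 0 <= K /\ forall x, N x <= K * enorm x.
Proof.
move=> /norm_le_sabs [K [HK HNK]].
exists (K * INR p); split => [|x]; first by have := pos_INR p; nra.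
by apply: Rle_trans (HNK x) _; have := l1norm_le_enorm x; nra.
Qed.

Lemma inv_INR_S_lt e : 0 < e -> exists M, forall m, (M <= m)%nat -> / (INR m + 1) < e.
Proof.
move=> He; have [M [HM HM0]] := archimed_cor1 _ He.
exists M => m /leP Hm; apply: Rle_lt_trans HM.
apply: Rinv_le_contravar; first exact: lt_0_INR.
by have := le_INR _ _ Hm; lra.
Qed.

Lemma vec_cauchy_limit n (xs : nat -> vec n) :
  (forall k, Cauchy_crit (fun m => xs m k)) ->
  exists l, forall e, 0 < e -> exists M, forall m, (M <= m)%nat -> l1norm (vsub l (xs m)) <= e.
Proof.
move=> HC.
pose l : vec n := fun k => proj1_sig (R_complete _ (HC k)).
exists l => e He.
have He' : 0 < e / (INR n + 1) by apply: Rdiv_lt_0_compat; have := pos_INR n; lra.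
have Hl k : exists M, forall m, (m >= M)%coq_nat -> Rdist (xs m k) (l k) < e / (INR n + 1).
  exact: (proj2_sig (R_complete _ (HC k))).
pose Mk k := proj1_sig (constructive_indefinite_description _ (Hl k)).
exists (\max_(k < n) Mk k) => m Hm.
apply: Rle_trans (_ : l1norm (vsub l (xs m)) <= INR n * (e / (INR n + 1))) _.
  rewrite -sumR_const; apply: sumR_le => k; apply: Rlt_le.
  rewrite /vsub Rabs_minus_sym.
  apply: (proj2_sig (constructive_indefinite_description _ (Hl k))); apply/leP.
  by apply: leq_trans Hm; apply: leq_bigmax.
by apply: Rmult_div_succ_le; [apply: pos_INR | lra].
Qed.

Lemma vunit0_shift_cauchy n (N : vec n.+1 -> R) c (ws : nat -> vec n) :
  is_norm N -> 0 < c -> (forall w k, c * Rabs (w k) <= N (vcons0 w)) ->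
  (forall m, N (vadd vunit0 (vcons0 (ws m))) < / (INR m + 1)) ->
  forall j, Cauchy_crit (fun m => ws m j).
Proof.
move=> HN Hc Hcw Hws j e He.
have [_ [_ [_ HD]]] := HN.
have Hdiff m m' : N (vcons0 (vsub (ws m) (ws m'))) <= / (INR m + 1) + / (INR m' + 1).
  have -> : vcons0 (vsub (ws m) (ws m')) = vadd (vadd vunit0 (vcons0 (ws m)))
      (vscale (-1) (vadd vunit0 (vcons0 (ws m')))) by coordwise; rewrite /vsub; ring.
  by apply: Rle_trans (HD _ _) _; rewrite (normN HN); have := Hws m; have := Hws m'; lra.
have [M HM] := @inv_INR_S_lt (e * c / 2) ltac:(nra).
exists M => m m' /leP Hm /leP Hm'; rewrite /Rdist.
have := Hcw (vsub (ws m) (ws m')) j; have := Hdiff m m'; rewrite /vsub.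
have := HM m Hm; have := HM m' Hm' => h1 h2 h3 h4.
by apply: (Rmult_lt_reg_l c) => //; lra.
Qed.

(* A minimizing sequence would be Cauchy, with a limit [w] such that
   [N (vadd vunit0 (vcons0 w)) = 0]. *)
Lemma norm_vunit0_shift_lb n (N : vec n.+1 -> R) :
  is_norm N -> (exists c, 0 < c /\ forall w k, c * Rabs (w k) <= N (vcons0 w)) ->
  exists d, 0 < d /\ forall w, d <= N (vadd vunit0 (vcons0 w)).
Proof.
move=> HN [c [Hc Hcw]]; have [H0 [HE [_ HD]]] := HN.
have [K [HK HNK]] := norm_le_sabs (is_norm_vcons0 HN).
apply: NNPP => Hnot.
have Hsmall m : exists w, N (vadd vunit0 (vcons0 w)) < / (INR m + 1).
  apply: NNPP => Hm; apply: Hnot; exists (/ (INR m + 1)); split.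
    by apply: Rinv_0_lt_compat; have := pos_INR m; lra.
  by move=> w; apply: Rnot_lt_le => Hw; apply: Hm; exists w.
pose ws m := proj1_sig (constructive_indefinite_description _ (Hsmall m)).
have Hws m : N (vadd vunit0 (vcons0 (ws m))) < / (INR m + 1).
  exact: (proj2_sig (constructive_indefinite_description _ (Hsmall m))).
have HC := vunit0_shift_cauchy HN Hc Hcw Hws.
have [l Hl] := vec_cauchy_limit HC.
have Hl0 : N (vadd vunit0 (vcons0 l)) <= 0.
  apply: Rle_plus_epsilon => e He; rewrite Rplus_0_l.
  have [M1 HM1] := @inv_INR_S_lt (e / 2) ltac:(lra).
  have [M2 HM2] := Hl (e / 2 / (K + 1)) ltac:(apply: Rdiv_lt_0_compat; lra).
  pose m := maxn M1 M2.
  have -> : vadd vunit0 (vcons0 l) =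
      vadd (vadd vunit0 (vcons0 (ws m))) (vcons0 (vsub l (ws m))).
    by coordwise; rewrite /vsub; ring.
  apply: Rle_trans (HD _ _) _.
  have h1 := HM1 m (leq_maxl _ _); have h2 := Hws m; have h3 := HNK (vsub l (ws m)).
  have h4 : K * l1norm (vsub l (ws m)) <= e / 2.
    have h5 := Rmult_div_succ_le HK (ltac:(lra) : 0 <= e / 2).
    have h6 : l1norm (vsub l (ws m)) <= e / 2 / (K + 1) by apply: HM2; apply: leq_maxr.
    by apply: Rle_trans h5; apply: Rmult_le_compat_l.
  lra.
have /HE Hz : N (vadd vunit0 (vcons0 l)) = 0 by have := H0 (vadd vunit0 (vcons0 l)); lra.
by have := f_equal (fun f => f ord0) Hz; rewrite /vadd vunit0_0 vcons0_0; lra.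
Qed.

Lemma norm_coord_lb n (N : vec n -> R) :
  is_norm N -> exists c, 0 < c /\ forall x i, c * Rabs (x i) <= N x.
Proof.
elim: n N => [|n IH] N HN; first by exists 1; split; [lra | move=> x -[]].
have [c [Hc Hcw]] := IH _ (is_norm_vcons0 HN).
have [d [Hd Hdw]] := norm_vunit0_shift_lb HN (ex_intro _ c (conj Hc Hcw)).
have [H0 [_ [HZ HD]]] := HN.
have HE := H0 vunit0.
have Hhead x : d * Rabs (x ord0) <= N x.
  have [Hx0|Hx0] := Req_dec (x ord0) 0; first by rewrite Hx0 Rabs_R0; have := H0 x; lra.
  have Ex : x = vscale (x ord0) (vadd vunit0 (vcons0 (vscale (/ x ord0) (vbehead x)))).
    by coordwise; field.
  rewrite {2}Ex HZ; have := Hdw (vscale (/ x ord0) (vbehead x)); have := Rabs_pos (x ord0).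
  by nra.
have Htail x : N (vcons0 (vbehead x)) <= N x + Rabs (x ord0) * N vunit0.
  have -> : vcons0 (vbehead x) = vadd x (vscale (- x ord0) vunit0) by coordwise; ring.
  by apply: Rle_trans (HD _ _) _; rewrite HZ Rabs_Ropp; lra.
pose c' := c * d / (d + N vunit0).
have Hc' : 0 < c' by apply: Rdiv_lt_0_compat; nra.
exists (Rmin d c'); split => [|x i]; first exact: Rmin_pos.
have Hm : 0 <= Rmin d c' by apply: Rlt_le; apply: Rmin_pos.
case: (unliftP ord0 i) => [k ->|->]; last first.
  by have := Rmin_l d c'; have := Hhead x; have := Rabs_pos (x ord0); nra.
suff Hk : c' * Rabs (x (lift ord0 k)) <= N x.
  by have := Rmin_r d c'; have := Rabs_pos (x (lift ord0 k)); nra.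
have h1 := Hcw (vbehead x) k; have h2 := Htail x; have h3 := Hhead x.
rewrite /vbehead in h1.
have -> : c' * Rabs (x (lift ord0 k)) = c * d * Rabs (x (lift ord0 k)) / (d + N vunit0).
  by rewrite /c'; field; lra.
apply: (Rmult_le_reg_r (d + N vunit0)); first lra.
rewrite /Rdiv Rmult_assoc Rinv_l; last lra.
rewrite Rmult_1_r.
have h4 := Rmult_le_compat_l _ _ _ (Rlt_le _ _ Hd) (Rle_trans _ _ _ h1 h2).
have h5 := Rmult_le_compat_l _ _ _ HE h3.
by nra.
Qed.

Lemma dot_le_dual_norm p (N : vec p -> R) z x :
  is_norm N -> dot z x <= dual_norm N z * N x.
Proof.
move=> HN; have [c [Hc Hlb]] := norm_coord_lb HN.
have [H0 [HE [HZ _]]] := HN.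
set E := fun r => exists x, N x <= 1 /\ r = dot z x.
have HEub : is_upper_bound E (l1norm z / c).
  move=> r [y [Hy ->]]; apply: Rle_trans (Rle_abs _) _.
  apply: Rle_trans (sumR_abs_le _) _; rewrite /l1norm /Rdiv big_distrl /=.
  apply: sumR_le => i; rewrite Rabs_mult.
  have Hyi : Rabs (y i) <= / c.
    apply: (Rmult_le_reg_l c) => //; rewrite Rinv_r; [have := Hlb y i; lra | lra].
  by apply: Rmult_le_compat_l => //; apply: Rabs_pos.
have HE0 : E 0 by exists vzero; split; [rewrite (norm0 HN); lra | rewrite dot0r].
have [l Hl] := completeness E (ex_intro _ _ HEub) (ex_intro _ _ HE0).
rewrite /dual_norm -/E (Rsup_lub Hl).
have [Hx|Hx] := Req_dec (N x) 0.
  by rewrite Hx (HE _ Hx) (dot0r z); lra.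
have Hxp : 0 < N x by have := H0 x; lra.
have : E (dot z (vscale (/ N x) x)).
  exists (vscale (/ N x) x); split => //.
  by rewrite HZ Rabs_pos_eq; [right; field | apply: Rlt_le; apply: Rinv_0_lt_compat]; lra.
move=> /(proj1 Hl); rewrite dotZr => h.
have -> : dot z x = (/ N x * dot z x) * N x by field; lra.
by apply: Rmult_le_compat_r; lra.
Qed.

(** * Gradients of conjugates and of Legendre functions *)

Lemma interior_mem p (D : vec p -> Prop) x : vinterior D x -> D x.
Proof. by move=> [r [Hr H]]; apply: H; rewrite vsubvv enorm0. Qed.

Section ConjugateGradient.
Context {p : nat}.
Implicit Types x y z u v w g th : vec p.
Variables (D : vec p -> Prop) (f : vec p -> R).

Lemma fconj_ge th w : conj_fin D f th -> D w -> dot th w - f w <= fconj D f th.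
Proof. by move=> [l Hl] Hw; rewrite /fconj (Rsup_lub Hl); apply: (proj1 Hl); exists w. Qed.

Lemma fconj_approx th eta :
  conj_fin D f th -> 0 < eta -> exists w, D w /\ fconj D f th - eta < dot th w - f w.
Proof.
move=> [l Hl] He; rewrite /fconj (Rsup_lub Hl); apply: NNPP => Hn.
have : l <= l - eta; last lra.
apply: (proj2 Hl) => r [w [Hw ->]].
by apply: Rnot_lt_le => Hlt; apply: Hn; exists w; split => //; lra.
Qed.

(* Tilting [th] by a step [h] towards [w - u] shows that [<w - u, h>] is at most
   the gap of [w] plus the linearization error of [fconj] at [th]. *)
Lemma near_argmax_conj_grad th u :
  has_grad (conj_fin D f) (fconj D f) th u ->
  forall e, 0 < e -> exists eta, 0 < eta /\ forall w, D w ->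
    fconj D f th - eta <= dot th w - f w -> enorm (vsub w u) <= e.
Proof.
move=> [[r [Hr Hint]] Hdiff] e He.
have [d [Hd Hdd]] := Hdiff (e / 2) ltac:(lra).
pose s := Rmin d r / 2.
have Hs0 : 0 < s by have := Rmin_pos _ _ Hd Hr; rewrite /s; lra.
have Hsd : s < d by have := Rmin_l d r; rewrite /s; lra.
have Hsr : s < r by have := Rmin_r d r; rewrite /s; lra.
exists (s * e / 2); split => [|w Dw Hgap]; first nra.
have [Hz|Hnz] := Req_dec (enorm (vsub w u)) 0; first lra.
have Hnw : 0 < enorm (vsub w u) by have := enorm_ge0 (vsub w u); lra.
pose h := vscale (s / enorm (vsub w u)) (vsub w u).
have Hh : enorm h = s.
  rewrite /h enormZ Rabs_pos_eq; first by field; lra.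
  by apply: Rlt_le; apply: Rdiv_lt_0_compat.
have H1 := fconj_ge (Hint (vadd th h) ltac:(rewrite vaddKv Hh; lra)) Dw.
have H2 := Hdd h ltac:(lra); rewrite Hh in H2.
have H3 := Rle_abs (fconj D f (vadd th h) - fconj D f th - dot u h).
have Ehw : dot h (vsub w u) = s * enorm (vsub w u).
  by rewrite /h dotZl dot_self_enorm; field; lra.
have : dot h (vsub w u) <= s * e.
  rewrite dotBr; rewrite dotDl (dotC th w) (dotC h w) in H1.
  by rewrite (dotC u h) in H2 H3; rewrite (dotC th w) in Hgap; rewrite (dotC h w); lra.
by rewrite Ehw => H4; apply: (Rmult_le_reg_l s) => //; lra.
Qed.

Lemma conj_grad_argmax th v :
  ext_lsc D f -> has_grad (conj_fin D f) (fconj D f) th v -> D v ->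
  forall w, D w -> dot th w - f w <= dot th v - f v.
Proof.
move=> Hlsc Hv Dv w Dw.
have Hfin := interior_mem (proj1 Hv).
apply: Rle_trans (fconj_ge Hfin Dw) _.
apply: Rle_plus_epsilon => dl Hdl.
have Hlt : f v - dl / 2 < f v by lra.
have [d1 [Hd1 Hdd1]] := Hlsc v (f v - dl / 2) (or_intror Hlt).
have HS := l1norm_ge0 th.
pose e := Rmin (d1 / 2) (dl / 4 / (l1norm th + 1)).
have He : 0 < e by apply: Rmin_pos; apply: Rdiv_lt_0_compat; lra.
have [eta [Heta Happ]] := near_argmax_conj_grad Hv He.
have Hdl4 : 0 < dl / 4 by lra.
have [w' [Dw' Hw']] := fconj_approx Hfin (Rmin_pos _ _ Heta Hdl4).
have Hm1 := Rmin_l eta (dl / 4); have Hm2 := Rmin_r eta (dl / 4).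
have Hwv := Happ w' Dw' ltac:(lra).
have He1 : e <= d1 / 2 := Rmin_l _ _.
have He2 : e <= dl / 4 / (l1norm th + 1) := Rmin_r _ _.
have Hfw' := Hdd1 w' ltac:(lra) Dw'.
have Hdt : dot th (vsub w' v) <= dl / 4.
  apply: Rle_trans (Rle_abs _) _; apply: Rle_trans (dot_abs_le _ _) _.
  apply: Rle_trans (Rmult_div_succ_le HS (Rlt_le _ _ Hdl4)).
  by apply: Rmult_le_compat_l => //; lra.
by rewrite dotBr in Hdt; lra.
Qed.

End ConjugateGradient.

Section LegendreGradient.
Context {p : nat}.
Implicit Types x y z u v w g th : vec p.
Variables (dom : vec p -> Prop) (Psi : vec p -> R).

Lemma has_grad_subgrad z g w :
  ext_convex dom Psi -> has_grad dom Psi z g -> dom w ->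
  Psi z + dot g (vsub w z) <= Psi w.
Proof.
move=> [_ Hcvx] [Hint Hdiff] Dw.
have Dz := interior_mem Hint.
set k := vsub w z; have Hk := enorm_ge0 k.
apply: (Rle_of_forall_small (K := enorm k)) => e [He _].
have [d [Hd Hdd]] := Hdiff e He.
pose t := Rmin 1 (d / (2 * (enorm k + 1))).
have Ht0 : 0 < t by apply: Rmin_pos; [lra | apply: Rdiv_lt_0_compat; lra].
have Ht1 : t <= 1 := Rmin_l _ _.
have Htk : t * enorm k < d.
  have Ht2 : t <= d / (2 * (enorm k + 1)) := Rmin_r _ _.
  have : t * (enorm k + 1) <= d / 2.
    apply: Rle_trans (Rmult_le_compat_r _ _ _ _ Ht2) _; first lra.
    by right; field; lra.
  lra.
have Eh : vadd z (vscale t k) = cvx t w z.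
  by apply: functional_extensionality => i; rewrite /cvx /k /vadd /vscale /vsub; ring.
have H1 := Hdd (vscale t k) ltac:(rewrite enormZ Rabs_pos_eq; lra).
rewrite Eh enormZ (Rabs_pos_eq t (Rlt_le _ _ Ht0)) in H1.
rewrite dotZr in H1.
have H2 := Hcvx w z t Dw Dz ltac:(lra).
have H3 := Rle_abs (- (Psi (cvx t w z) - Psi z - t * dot g k)).
rewrite Rabs_Ropp in H3.
apply: (Rmult_le_reg_l t) => //; nra.
Qed.

Lemma interior_cvx x0 mu s :
  vconvex dom -> vinterior dom x0 -> dom mu -> 0 < s <= 1 -> vinterior dom (cvx s x0 mu).
Proof.
move=> Hcv [r [Hr Hball]] Dmu Hs.
exists (s * r); split => [|y Hy]; first nra.
pose y' := vadd x0 (vscale (/ s) (vsub y (cvx s x0 mu))).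
have Dy' : dom y'.
  apply: Hball; rewrite /y' vaddKv enormZ Rabs_pos_eq; last first.
    by apply: Rlt_le; apply: Rinv_0_lt_compat; lra.
  apply: (Rmult_lt_reg_l s); first lra.
  by rewrite -Rmult_assoc Rinv_r; lra.
have -> : y = cvx s y' mu.
  apply: functional_extensionality => i.
  by rewrite /cvx /y' /vadd /vscale /vsub /cvx /vadd /vscale; field; lra.
by apply: Hcv => //; lra.
Qed.

Lemma grad_eq_of_argmax th v g :
  has_grad dom Psi v g ->
  (forall w, dom w -> dot th w - Psi w <= dot th v - Psi v) -> th = g.
Proof.
move=> [[r [Hr Hint]] Hdiff] Hmax.
set k := vsub th g.
suff /enorm_eq0 Hk : enorm k = 0.
  apply: functional_extensionality => i.
  by have := f_equal (fun x => x i) Hk; rewrite /k /vsub /vzero; lra.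
have Hk0 := enorm_ge0 k.
apply: Rle_antisym => //; apply: Rle_plus_epsilon => e He; rewrite Rplus_0_l.
have [d [Hd Hdd]] := Hdiff e He.
have [->|Hnz] := Req_dec (enorm k) 0; first lra.
have Hnk : 0 < enorm k by lra.
pose s := Rmin d r / 2.
have Hs0 : 0 < s by have := Rmin_pos _ _ Hd Hr; rewrite /s; lra.
have Hsd : s < d by have := Rmin_l d r; rewrite /s; lra.
have Hsr : s < r by have := Rmin_r d r; rewrite /s; lra.
pose h := vscale (s / enorm k) k.
have Hh : enorm h = s.
  rewrite /h enormZ Rabs_pos_eq; first by field; lra.
  by apply: Rlt_le; apply: Rdiv_lt_0_compat.
have H1 := Hmax _ (Hint (vadd v h) ltac:(rewrite vaddKv Hh; lra)).
have H2 := Hdd h ltac:(lra); rewrite Hh in H2.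
have H3 := Rle_abs (Psi (vadd v h) - Psi v - dot g h).
have Ekh : dot k h = s * enorm k by rewrite /h dotZr dot_self_enorm; field; lra.
have : dot k h <= e * s.
  rewrite /k dotBl; rewrite dotDr (dotC th h) in H1.
  by rewrite (dotC th h); lra.
by rewrite Ekh => H4; apply: (Rmult_le_reg_l s) => //; lra.
Qed.

End LegendreGradient.

(** * The conjugate of Psi + I_C *)

Section OmegaConjugate.
Context {p : nat}.
Implicit Types x y z u v w g th mu : vec p.
Variables (dom C : vec p -> Prop) (Psi : vec p -> R).
Hypothesis HCdom : forall w, C w -> dom w.

Lemma Omega_star_argmax th u :
  C u -> (forall w, C w -> dot th w - Psi w <= dot th u - Psi u) ->
  conj_fin (Omega_dom dom C) Psi th /\ Omega_star dom C Psi th = dot th u - Psi u.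
Proof.
move=> Cu Hmax.
have Hl : is_lub (conj_set (Omega_dom dom C) Psi th) (dot th u - Psi u).
  split => [r [w [[_ Cw] ->]]|b Hb]; first exact: Hmax.
  by apply: Hb; exists u; split => //; split => //; apply: HCdom.
by split; [exists (dot th u - Psi u) | rewrite /Omega_star /fconj (Rsup_lub Hl)].
Qed.

Lemma bregman_proj_argmax th u :
  legendre_type dom Psi -> bregman_proj dom C Psi th u ->
  C u /\ forall w, C w -> dot th w - Psi w <= dot th u - Psi u.
Proof.
move=> [_ [_ [Hlsc _]]] [v [g [Hv [Hg [Cu Hmin]]]]].
have Etg := grad_eq_of_argmax Hg (conj_grad_argmax Hlsc Hv (interior_mem (proj1 Hg))).
by split => // w Cw; have := Hmin w Cw; rewrite /bregman !dotBr Etg; lra.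
Qed.

Definition argmax_limit (N : vec p -> R) th u := forall e, 0 < e -> exists w, C w /\
  Omega_star dom C Psi th - e <= dot th w - Psi w /\ N (vsub w u) <= e.

(* In the Bregman case [grad Psi (grad Psi^* th) = th], so [u] is an exact maximizer;
   otherwise near-maximizers converge to [u = grad Omega^* th]. *)
Lemma proj_rel_argmax_limit N th u :
  is_norm N -> legendre_type dom Psi -> proj_rel dom C Psi th u ->
  conj_fin (Omega_dom dom C) Psi th /\ argmax_limit N th u.
Proof.
move=> HN Hleg [Hbp|[_ Hgr]].
  have [Cu Hmax] := bregman_proj_argmax Hleg Hbp.
  have [Hfin HO] := Omega_star_argmax Cu Hmax.
  by split => // e He; exists u; rewrite HO vsubvv (norm0 HN); split => //; lra.
have Hfin := interior_mem (proj1 Hgr); split => // e He.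
have [K [HK HNK]] := norm_le_enorm HN.
have HK1 : 0 < K + 1 by lra.
have [eta [Heta Hnear]] := near_argmax_conj_grad Hgr (Rdiv_lt_0_compat _ _ He HK1).
have [w [[Dw Cw] Hw]] := fconj_approx Hfin (Rmin_pos _ _ Heta He).
have Hm1 := Rmin_l eta e; have Hm2 := Rmin_r eta e.
exists w; split => //; split; first by rewrite /Omega_star; lra.
apply: Rle_trans (HNK _) _; apply: Rle_trans (Rmult_div_succ_le HK (Rlt_le _ _ He)).
by apply: Rmult_le_compat_l => //; apply: Hnear => //; lra.
Qed.

Lemma Omega_star_ge_strongly_convex N beta th mu w t :
  strongly_convex_over Psi C N beta -> vconvex C -> conj_fin (Omega_dom dom C) Psi th ->
  C mu -> C w -> 0 <= t <= 1 ->
  t * (dot th mu - Psi mu) + (1 - t) * (dot th w - Psi w)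
    + t * (1 - t) / (2 * beta) * N (vsub mu w) ^ 2 <= Omega_star dom C Psi th.
Proof.
move=> Hsc Hcv Hfin Cmu Cw Ht.
have Cv : C (cvx t mu w) by apply: Hcv.
have := fconj_ge Hfin (conj (HCdom Cv) Cv : Omega_dom dom C (cvx t mu w)).
have := Hsc mu w t Cmu Cw Ht.
by rewrite /Omega_star /cvx dotDr !dotZr; lra.
Qed.

(* Combining [mu] with an [s^2]-maximizer [w] at weight [s] and letting [s -> 0]. *)
Lemma argmax_limit_strongly_convex N beta th u mu :
  is_norm N -> 0 < beta -> strongly_convex_over Psi C N beta -> vconvex C -> C mu ->
  conj_fin (Omega_dom dom C) Psi th -> argmax_limit N th u ->
  N (vsub mu u) ^ 2 / (2 * beta) <= Omega_star dom C Psi th + Psi mu - dot th mu.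
Proof.
move=> HN Hb Hsc Hcv Cmu Hfin Hlim.
set n := N (vsub mu u); set G := _ + _ - _.
have Hn := norm_ge0 HN (vsub mu u); rewrite -/n in Hn.
set ib := / (2 * beta); have Hib : 0 < ib by apply: Rinv_0_lt_compat; lra.
rewrite /Rdiv -/ib.
apply: (Rle_of_forall_small (K := 1 + (n ^ 2 + 2 * n + 1) * ib)) => s [Hs0 Hs1].
have [w [Cw [Hgap Hwu]]] := Hlim (s * s) ltac:(nra).
have H := Omega_star_ge_strongly_convex Hsc Hcv Hfin Cmu Cw (conj (Rlt_le _ _ Hs0) (Rlt_le _ _ Hs1)).
rewrite /Rdiv -/ib in H.
set M := N (vsub mu w) in H.
have HM := norm_ge0 HN (vsub mu w); rewrite -/M in HM.
have HnM : n <= M + s * s by have := norm_vsub_triangle HN mu w u; rewrite -/n -/M; lra.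
have Hn2 : n ^ 2 <= M ^ 2 + s * (2 * n + 1).
  have [HMn|HMn] := Rle_or_lt n M; first by have := Rmult_le_compat _ _ _ _ Hn Hn HMn HMn; nra.
  have Hsq : n * n <= (M + s) * (M + s) by apply: Rmult_le_compat; nra.
  nra.
have HMs : (1 - s) * M ^ 2 * ib <= G + s.
  apply: (Rmult_le_reg_l s) => //.
  have := Rmult_le_compat_l (1 - s) _ _ ltac:(lra) Hgap; rewrite /G; nra.
have := Rmult_le_compat_r ib _ _ (Rlt_le _ _ Hib)
  (Rmult_le_compat_l (1 - s) _ _ ltac:(lra) Hn2).
have : 0 <= s * s * (2 * n + 1) * ib.
  by apply: Rmult_le_pos; [apply: Rmult_le_pos; nra | lra].
lra.
Qed.

Lemma Omega_star_le_at_grad z g mu :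
  ext_convex dom Psi -> has_grad dom Psi z g -> Omega_dom dom C mu ->
  conj_fin (Omega_dom dom C) Psi g /\ Omega_star dom C Psi g <= dot g z - Psi z.
Proof.
move=> Hc Hg Hmu.
set E := conj_set (Omega_dom dom C) Psi g.
have Hub : is_upper_bound E (dot g z - Psi z).
  by move=> r [w [[Dw _] ->]]; have := has_grad_subgrad Hc Hg Dw; rewrite dotBr; lra.
have [l Hl] := completeness E (ex_intro _ _ Hub) (ex_intro _ _ (ex_intro _ mu (conj Hmu erefl))).
split; first by exists l.
by rewrite /Omega_star /fconj -/E (Rsup_lub Hl); apply: (proj2 Hl).
Qed.

Lemma Omega_star_gap_at_grad x0 mu s g :
  ext_convex dom Psi -> dom x0 -> has_grad dom Psi (cvx s x0 mu) g ->
  Omega_dom dom C mu -> 0 < s < 1 ->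
  conj_fin (Omega_dom dom C) Psi g /\
  Omega_star dom C Psi g - dot g mu + Psi mu <=
    Psi mu - Psi (cvx s x0 mu) + s / (1 - s) * (Psi x0 - Psi (cvx s x0 mu)).
Proof.
move=> Hc Dx0 Hg Hmu Hs; set z := cvx s x0 mu in Hg *.
have [Hfin Hup] := Omega_star_le_at_grad Hc Hg Hmu.
split => //.
have Hsub := has_grad_subgrad Hc Hg Dx0.
have Exz : vsub x0 z = vscale (1 - s) (vsub x0 mu).
  by apply: functional_extensionality => i; rewrite /z /cvx /vsub /vadd /vscale; ring.
have Ezm : vsub z mu = vscale s (vsub x0 mu).
  by apply: functional_extensionality => i; rewrite /z /cvx /vsub /vadd /vscale; ring.
have Ez : dot g z - dot g mu = s * dot g (vsub x0 mu) by rewrite -dotBr Ezm dotZr.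
rewrite Exz dotZr in Hsub.
have -> : s / (1 - s) * (Psi x0 - Psi z) =
  s * dot g (vsub x0 mu) + s / (1 - s) * (Psi x0 - Psi z - (1 - s) * dot g (vsub x0 mu)).
  by field; lra.
have : 0 <= s / (1 - s) * (Psi x0 - Psi z - (1 - s) * dot g (vsub x0 mu)).
  by apply: Rmult_le_pos; [apply: Rlt_le; apply: Rdiv_lt_0_compat | ]; lra.
lra.
Qed.

(* Gradients at points [z] strictly between an interior point [x0] and [mu]
   approach [mu]; lower semicontinuity of [Psi] at [mu] controls [Psi z]. *)
Lemma Omega_star_gap_small mu :
  legendre_type dom Psi -> Omega_dom dom C mu ->
  forall e, 0 < e -> exists th, conj_fin (Omega_dom dom C) Psi th /\
    Omega_star dom C Psi th - dot th mu + Psi mu <= e.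
Proof.
move=> [_ [Hc [Hlsc [[[x0 Hx0] [Hgrad _]] _]]]] Hmu e He.
have Dmu : dom mu by case: Hmu.
have Hlt : Psi mu - e / 2 < Psi mu by lra.
have [d [Hd Hnear]] := Hlsc mu (Psi mu - e / 2) (or_intror Hlt).
set m := enorm (vsub x0 mu); have Hm : 0 <= m := enorm_ge0 _.
set B := Rabs (Psi x0 - Psi mu) + e / 2.
have HB : 0 <= B by have := Rabs_pos (Psi x0 - Psi mu); rewrite /B; lra.
pose s := Rmin (1 / 2) (Rmin (d / 2 / (m + 1)) (e / 4 / (B + 1))).
have Hs0 : 0 < s.
  by apply: Rmin_pos; [lra | apply: Rmin_pos; apply: Rdiv_lt_0_compat; lra].
have Hs1 : s <= 1 / 2 := Rmin_l _ _.
have Hsm : s * m < d.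
  have : s <= d / 2 / (m + 1) := Rle_trans _ _ _ (Rmin_r _ _) (Rmin_l _ _).
  have := Rmult_div_succ_le Hm (ltac:(lra) : 0 <= d / 2); nra.
have HsB : s * B <= e / 4.
  have : s <= e / 4 / (B + 1) := Rle_trans _ _ _ (Rmin_r _ _) (Rmin_r _ _).
  have := Rmult_div_succ_le HB (ltac:(lra) : 0 <= e / 4); nra.
pose z := cvx s x0 mu.
have Hz : vinterior dom z by apply: interior_cvx => //; [exact: (proj1 Hc) | lra].
have [g Hg] := Hgrad z Hz.
have [Hfin Hgap] := Omega_star_gap_at_grad Hc (interior_mem Hx0) Hg Hmu (ltac:(lra) : 0 < s < 1).
exists g; split => //; rewrite -/z in Hgap.
have Hpz : Psi mu - e / 2 < Psi z.
  apply: Hnear; last exact: interior_mem Hz.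
  have -> : vsub z mu = vscale s (vsub x0 mu).
    by apply: functional_extensionality => i; rewrite /z /cvx /vsub /vadd /vscale; ring.
  by rewrite enormZ Rabs_pos_eq -/m; lra.
have Hx0z : Psi x0 - Psi z <= B by have := Rle_abs (Psi x0 - Psi mu); rewrite /B; lra.
have := Rdiv_compl_mul_le (conj Hs0 Hs1) Hx0z HB.
lra.
Qed.

End OmegaConjugate.

(** * Risks through the mean of phi *)

Section Means.
Context {p : nat} {Y : finType}.
Implicit Types (q : Y -> R) (w : Y -> vec p).

Definition vmean q w : vec p := fun i => \big[Rplus/R0]_(y : Y) (q y * w y i).

Lemma dot_vmean q w x : dot x (vmean q w) = \big[Rplus/R0]_(y : Y) (q y * dot x (w y)).
Proof.
rewrite /dot /vmean; under eq_bigr => i _ do rewrite big_distrr /=.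
rewrite exchange_big /=; apply: eq_bigr => y _.
by rewrite big_distrr /=; apply: eq_bigr => i _; ring.
Qed.

Lemma big_seq_nonneg_eq0 (s : seq Y) q w :
  (forall y, 0 <= q y) -> \big[Rplus/R0]_(y <- s) q y = 0 ->
  forall i, \big[Rplus/R0]_(y <- s) (q y * w y i) = 0.
Proof.
move=> Hq; elim: s => [|a s IH] Hs i; first by rewrite big_nil.
rewrite big_cons in Hs; rewrite big_cons.
have Hs0 : 0 <= \big[Rplus/R0]_(y <- s) q y.
  by apply: (big_ind (fun a => 0 <= a)); [lra | move=> ? ?; lra | move=> y _; apply: Hq].
have Hqa : q a = 0 by have := Hq a; lra.
have Hs' : \big[Rplus/R0]_(y <- s) q y = 0 by lra.
by rewrite (IH Hs') Hqa; ring.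
Qed.

Lemma convex_big_seq (C : vec p -> Prop) (s : seq Y) q w :
  vconvex C -> (forall y, C (w y)) -> (forall y, 0 <= q y) ->
  \big[Rplus/R0]_(y <- s) q y = 1 -> C (fun i => \big[Rplus/R0]_(y <- s) (q y * w y i)).
Proof.
move=> Hcv Hw; elim: s q => [|a s IH] q Hq; first by rewrite big_nil; lra.
rewrite big_cons => Hs; set T := \big[Rplus/R0]_(y <- s) q y in Hs.
have HT : 0 <= T.
  by apply: (big_ind (fun a => 0 <= a)); [lra | move=> ? ?; lra | move=> y _; apply: Hq].
have Hqa := Hq a.
have [HT0|HTn] := Req_dec T 0.
  have -> : (fun i => \big[Rplus/R0]_(y <- a :: s) (q y * w y i)) = w a.
    apply: functional_extensionality => i; rewrite big_cons big_seq_nonneg_eq0 //.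
    by rewrite (_ : q a = 1); [ring | lra].
  exact: Hw.
pose q' y := q y / T.
have Hq' y : 0 <= q' y.
  by apply: Rmult_le_pos; [apply: Hq | apply: Rlt_le; apply: Rinv_0_lt_compat; lra].
have Hs' : \big[Rplus/R0]_(y <- s) q' y = 1 by rewrite /q' /Rdiv -big_distrl /= -/T; field.
have -> : (fun i => \big[Rplus/R0]_(y <- a :: s) (q y * w y i)) =
    cvx (q a) (w a) (fun i => \big[Rplus/R0]_(y <- s) (q' y * w y i)).
  apply: functional_extensionality => i; rewrite big_cons /cvx /vadd /vscale.
  congr (_ + _); rewrite big_distrr /=; apply: eq_bigr => y _; rewrite /q'.
  by rewrite (_ : 1 - q a = T); [field | lra].
by apply: Hcv => //; [exact: IH | lra].
Qed.

Lemma vmean_convex (C : vec p -> Prop) q w :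
  vconvex C -> (forall y, C (w y)) -> in_simplex q -> C (vmean q w).
Proof. by move=> Hcv Hw [Hq Hs]; apply: convex_big_seq. Qed.

End Means.

Lemma mulmtv_dot p (V : mat p) z x : dot (mulmtv V z) x = dot z (mulmv V x).
Proof.
rewrite /dot /mulmtv /mulmv; under eq_bigr => j _ do rewrite big_distrl /=.
rewrite exchange_big /=; apply: eq_bigr => i _.
by rewrite big_distrr /=; apply: eq_bigr => j _; ring.
Qed.

Lemma finite_argmin (O : finType) (f : O -> R) (o0 : O) : exists o, forall o', f o <= f o'.
Proof.
suff [o [_ Ho]] : exists o, f o <= f o0 /\ forall o', o' \in enum O -> f o <= f o'.
  by exists o => o'; apply: Ho; rewrite mem_enum.
elim: (enum O) => [|a s [o [Ho Hs]]]; first by exists o0; split => //; lra.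
have [Ha|Ha] := Rle_or_lt (f a) (f o).
  exists a; split => [|o']; first lra.
  by rewrite in_cons => /orP [/eqP ->|/Hs]; lra.
by exists o; split => // o'; rewrite in_cons => /orP [/eqP ->|/Hs]; lra.
Qed.

Lemma Rinf_image_min (O : finType) (f : O -> R) o :
  (forall o', f o <= f o') -> Rinf (fun w => exists o', w = f o') = f o.
Proof.
move=> Ho; rewrite /Rinf (Rsup_lub (l := - f o)); first ring.
split => [r [o' Ho']|r Hr]; last by apply: Hr; exists o; ring.
by have := Ho o'; lra.
Qed.

Lemma quadratic_rate_le eps n beta sigma :
  0 <= eps -> 0 < beta -> 0 < sigma -> eps <= 2 * sigma * n ->
  eps ^ 2 / (8 * beta * sigma ^ 2) <= n ^ 2 / (2 * beta).
Proof.
move=> He Hb Hs Hn.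
have -> : n ^ 2 / (2 * beta) = (2 * sigma * n) ^ 2 / (8 * beta * sigma ^ 2) by field; lra.
apply: Rmult_le_compat_r.
  by apply: Rlt_le; apply: Rinv_0_lt_compat; have := pow_lt _ 2 Hs; nra.
by apply: pow_incr; lra.
Qed.

Section Risks.
Variables (p : nat) (Y O : finType).
Variables (phi : Y -> vec p) (psi : O -> vec p) (V : mat p) (b : vec p) (c : Y -> R).
Variables (dom C : vec p -> Prop) (Psi : vec p -> R).
Variable q : Y -> R.
Hypothesis Hq : in_simplex q.

Let mu := vmean q phi.

Lemma srisk_vmean th :
  srisk phi dom C Psi th q =
  Omega_star dom C Psi th + \big[Rplus/R0]_(y : Y) (q y * Psi (phi y)) - dot th mu.
Proof.
rewrite /srisk /surr dot_vmean.
rewrite (eq_bigr (fun y => q y * Omega_star dom C Psi th +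
  (q y * Psi (phi y) + (-1) * (q y * dot th (phi y))))); last by move=> y _; ring.
by rewrite !big_split /= -big_distrl -big_distrr /= (proj2 Hq); ring.
Qed.

Lemma ell_vmean o :
  ell psi phi V b c o q = dot (psi o) (vadd (mulmv V mu) b) + \big[Rplus/R0]_(y : Y) (q y * c y).
Proof.
rewrite /ell /lossL dotDr -mulmtv_dot dot_vmean.
rewrite (eq_bigr (fun y => q y * dot (mulmtv V (psi o)) (phi y) +
  (q y * dot (psi o) b + q y * c y))); last by move=> y _; rewrite dotDr -mulmtv_dot; ring.
by rewrite !big_split /= -(big_distrl (dot (psi o) b)) /= (proj2 Hq); ring.
Qed.

Lemma delta_s_ge_conj_gap th :
  legendre_type dom Psi -> (forall w, C w -> dom w) -> vconvex C -> (forall y, C (phi y)) ->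
  Omega_star dom C Psi th + Psi mu - dot th mu <= delta_s phi dom C Psi th q.
Proof.
move=> Hleg HCdom Hcv Hphi.
have Cmu : C mu := vmean_convex Hcv Hphi Hq.
suff : Rinf (fun w => exists th', w = srisk phi dom C Psi th' q) <=
    \big[Rplus/R0]_(y : Y) (q y * Psi (phi y)) - Psi mu.
  by rewrite /delta_s srisk_vmean; lra.
apply: Rle_plus_epsilon => e He.
have [th' [Hfin Hgap]] := Omega_star_gap_small Hleg (conj (HCdom _ Cmu) Cmu) He.
have Hsr0 : 0 <= srisk phi dom C Psi th' q.
  apply: sumR_ge0 => y; apply: Rmult_le_pos; first exact: (proj1 Hq).
  have := fconj_ge Hfin (conj (HCdom _ (Hphi y)) (Hphi y) : Omega_dom dom C (phi y)).
  by rewrite /surr /Omega_star; lra.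
apply: Rle_trans (Rinf_le_nonneg (ex_intro _ th' erefl) Hsr0) _.
by rewrite srisk_vmean; lra.
Qed.

Lemma delta_ell_le_norm N sigma u o :
  is_norm N -> (forall o', dual_norm N (mulmtv V (psi o')) <= sigma) ->
  yhat_rel psi V b u o -> delta_ell psi phi V b c o q <= 2 * sigma * N (vsub mu u).
Proof.
move=> HN Hsig Hyh.
have [os Hos] := finite_argmin (fun o' => ell psi phi V b c o' q) o.
rewrite /delta_ell (Rinf_image_min Hos) !ell_vmean.
have Hsplit o' : dot (psi o') (vadd (mulmv V mu) b) =
    dot (psi o') (vadd (mulmv V u) b) + dot (mulmtv V (psi o')) (vsub mu u).
  by rewrite dotBr !mulmtv_dot !dotDr; ring.
have Hn := norm_ge0 HN (vsub mu u).
have B1 := dot_le_dual_norm (mulmtv V (psi o)) (vsub mu u) HN.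
have B2 := dot_le_dual_norm (mulmtv V (psi os)) (vsub u mu) HN.
rewrite (norm_vsubC HN u mu) (vsubNC mu u) dotZr in B2.
have := Rmult_le_compat_r _ _ _ Hn (Hsig o).
have := Rmult_le_compat_r _ _ _ Hn (Hsig os).
by have := Hyh os; rewrite !Hsplit; lra.
Qed.

End Risks.

Theorem mainTheorem8 (p : nat) (Y O : finType)
    (phi : Y -> vec p) (psi : O -> vec p) (V : mat p) (b : vec p) (c : Y -> R)
    (dom : vec p -> Prop) (Psi : vec p -> R)
    (N : vec p -> R) (beta : R) (C : vec p -> Prop) (sigma : R) :
  is_norm N ->
  0 < beta ->
  legendre_type dom Psi ->
  vclosed C -> vconvex C ->
  (forall y, C (phi y)) -> (forall u, C u -> dom u) ->
  strongly_convex_over Psi C N beta ->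
  (forall o, dual_norm N (mulmtv V (psi o)) <= sigma) ->
  (exists o, dual_norm N (mulmtv V (psi o)) = sigma) ->
  0 < sigma ->
  forall eps, 0 <= eps ->
    zeta_ge psi phi V b c dom C Psi eps (eps ^ 2 / (8 * beta * sigma ^ 2)).
Proof.
move=> HN Hbeta Hleg _ Hcv Hphi HCdom Hsc Hsig _ Hsig0 eps Heps th q o Hq [u [Hu Hyh]] Hell.
have Cmu : C (vmean q phi) := vmean_convex Hcv Hphi Hq.
have [Hfin Hlim] := proj_rel_argmax_limit HCdom HN Hleg Hu.
have Hgap := argmax_limit_strongly_convex HCdom HN Hbeta Hsc Hcv Cmu Hfin Hlim.
have Hds := delta_s_ge_conj_gap Hq th Hleg HCdom Hcv Hphi.
have Hdl := delta_ell_le_norm phi c Hq HN Hsig Hyh.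
apply: (Rle_trans _ _ _ _ Hds); apply: (Rle_trans _ _ _ _ Hgap).
by apply: quadratic_rate_le => //; lra.
Qed.
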